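(* Work in second-order logic (with the Comprehension scheme) in the language whose only non-logical primitive is the binary relation $\in$, and assume only the axioms Extensionality, $\forall a\forall b(\forall x(x\in a\leftrightarrow x\in b)\to a=b)$, and Separation, $\forall F\forall a\exists b\forall x(x\in b\leftrightarrow (F(x)\wedge x\in a))$. Then the levels are well-ordered by membership. That is: (i) for every property $F$, if some level is $F$, then there is a level $s$ that is $F$ such that no level $r\in s$ is $F$; and (ii) for any levels $s,t$: $s\in t$ or $s=t$ or $t\in s$.
   Context: For a set $a$, its potentiation is $\mathrm{pot}(a)=\{x : \exists c(x\subseteq c\wedge c\in a)\}$, when this set exists (i.e. ''$b=\mathrm{pot}(a)$'' abbreviates $\forall x(x\in b\leftrightarrow\exists c(x\subseteq c\wedge c\in a))$). A set $h$ is a history iff for every $x\in h$, $x=\mathrm{pot}(x\cap h)$. A set $s$ is a level iff $s=\mathrm{pot}(h)$ for some history $h$. *)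

(* The universe of sets is an arbitrary type U with a binary relation mem
   (x ∈ a  is  mem x a).  Second-order properties are predicates U -> Prop. *)

Section Potentiation.
Variable U : Type.
Variable mem : U -> U -> Prop.

Definition subset (x c : U) : Prop := forall z, mem z x -> mem z c.

Definition is_pot (a b : U) : Prop :=
  forall x, mem x b <-> exists c, subset x c /\ mem c a.

(* h is a history: for every x ∈ h, x = pot(x ∩ h), where "c ∈ x ∩ h"
   is unfolded as "c ∈ x ∧ c ∈ h". *)
Definition history (h : U) : Prop :=
  forall x, mem x h ->
    forall y, mem y x <-> exists c, subset y c /\ (mem c x /\ mem c h).

Definition level (s : U) : Prop := exists h, history h /\ is_pot h s.

Definition Extensionality : Prop :=
  forall a b : U, (forall x, mem x a <-> mem x b) -> a = b.

Definition Separation : Prop :=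
  forall (F : U -> Prop) (a : U), exists b, forall x, mem x b <-> (F x /\ mem x a).

End Potentiation.

Arguments subset {U} mem x c.
Arguments is_pot {U} mem a b.
Arguments history {U} mem h.
Arguments level {U} mem s.
Arguments Extensionality {U} mem.
Arguments Separation {U} mem.

(* Say that c lies below y when every subset of c belongs to y.  Separation
   alone forbids a nonempty class N each member of which lies above another
   member: the Russell set of those elements of some y ∈ N that belong to
   every member of N would belong to itself iff it does not.  Hence
   (classically) one may argue by induction along "below".  By such an
   induction every element c of a history h has c ∩ h transitive relative to
   h, so c ∩ h is again a history and c a level.  A level lies above each of
   its elements, and every element of a level is a subset of some level
   belonging to it.  Well-foundedness of the levels is then the induction
   principle restricted to levels, and trichotomy follows by a double
   induction, the induction hypotheses and Extensionality showing that two
   incomparable levels have the same elements. *)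

From Stdlib Require Import Classical.

Section Levels.

Context {U : Type} (mem : U -> U -> Prop).
Hypothesis ext : Extensionality mem.
Hypothesis sep : Separation mem.

Definition subsets_in (c y : U) : Prop := forall z, subset mem z c -> mem z y.

Definition comparable (s t : U) : Prop := mem s t \/ s = t \/ mem t s.

Lemma no_subsets_in_descent (N : U -> Prop) :
  (forall y, N y -> exists c, N c /\ subsets_in c y) -> forall y, ~ N y.
Proof.
  intros descent y Ny.
  destruct (sep (fun z => ~ mem z z /\ forall y', N y' -> mem z y') y) as [r Hr].
  assert (r_in_N : forall y', N y' -> mem r y').
  { intros y' Ny'. destruct (descent y' Ny') as [c [Nc below]].
    apply below. intros z Hz. apply Hr in Hz as [[_ Hz] _]. exact (Hz c Nc). }
  assert (r_notin_r : ~ mem r r).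
  { intro Hrr. apply Hr in Hrr as Hrr'. destruct Hrr' as [[Hn _] _]. exact (Hn Hrr). }
  apply r_notin_r, Hr. split; [split|]; auto.
Qed.

Lemma subsets_in_induction (P : U -> Prop) :
  (forall y, (forall c, subsets_in c y -> P c) -> P y) -> forall y, P y.
Proof.
  intros step y. apply NNPP. revert y.
  apply no_subsets_in_descent. intros y notPy.
  apply NNPP. intros no_c. apply notPy, step. intros c below.
  apply NNPP. intros notPc. apply no_c. exists c. auto.
Qed.

Lemma level_subsets_in s r : level mem s -> mem r s -> subsets_in r s.
Proof.
  intros [h [_ pot_s]] Hr z Hz. apply pot_s in Hr as [c [Hrc Hc]].
  apply pot_s. exists c. split; [intros w Hw; apply Hrc, Hz, Hw | exact Hc].
Qed.

Lemma level_trans s y z : level mem s -> mem z y -> mem y s -> mem z s.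
Proof.
  intros [h [hist pot_s]] Hz Hy. apply pot_s in Hy as [c [Hyc Hc]].
  specialize (Hyc z Hz).
  apply (hist c Hc) in Hyc as [d [Hzd [_ Hd]]].
  apply pot_s. exists d. auto.
Qed.

Definition trans_in (h c : U) : Prop :=
  forall e f, mem e c -> mem e h -> mem f e -> mem f h -> mem f c.

Lemma history_elem_trans_in h : history mem h -> forall c, mem c h -> trans_in h c.
Proof.
  intros hist c. pattern c. apply subsets_in_induction. clear c.
  intros c IH Hc e f He Heh Hf Hfh.
  assert (e_below_c : subsets_in e c).
  { intros z Hz. apply (hist c Hc). exists e. auto. }
  assert (e_trans : trans_in h e) by exact (IH e e_below_c Heh).
  apply (hist e Heh) in Hf as [g [Hfg [Hge Hgh]]].
  assert (g_sub_e : subset mem g e).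
  { intros w Hw. apply (hist g Hgh) in Hw as [v [Hwv [Hvg Hvh]]].
    apply (hist e Heh). exists v. split; [exact Hwv | split; [apply (e_trans g v) | ]]; auto. }
  apply e_below_c. intros z Hz. apply g_sub_e, Hfg, Hz.
Qed.

Lemma history_elem_level h c : history mem h -> mem c h -> level mem c.
Proof.
  intros hist Hc.
  destruct (sep (fun d => mem d c) h) as [k Hk].
  exists k. split.
  - intros y Hy w. apply Hk in Hy as [Hyc Hyh]. rewrite (hist y Hyh w). split.
    + intros [d [Hwd [Hdy Hdh]]]. exists d. repeat split; auto.
      apply Hk. split; [apply (history_elem_trans_in h hist c Hc y d) |]; auto.
    + intros [d [Hwd [Hdy Hdk]]]. apply Hk in Hdk. exists d. tauto.
  - intro w. rewrite (hist c Hc w). split.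
    + intros [d [Hwd [Hdc Hdh]]]. exists d. split; [| apply Hk]; auto.
    + intros [d [Hwd Hdk]]. apply Hk in Hdk. exists d. tauto.
Qed.

Lemma level_elem_sub_level s x :
  level mem s -> mem x s -> exists r, level mem r /\ mem r s /\ subset mem x r.
Proof.
  intros [h [hist pot_s]] Hx. apply pot_s in Hx as [c [Hxc Hc]].
  exists c. split; [exact (history_elem_level h c hist Hc) | split; [| exact Hxc]].
  apply pot_s. exists c. split; [intros z Hz; exact Hz | exact Hc].
Qed.

Lemma exists_min_level (F : U -> Prop) :
  (exists s, level mem s /\ F s) ->
  exists s, level mem s /\ F s /\ (forall r, level mem r -> mem r s -> ~ F r).
Proof.
  intros [s0 [Ls0 Fs0]]. apply NNPP. intros no_min.
  revert s0 Ls0 Fs0. apply (subsets_in_induction (fun y => level mem y -> ~ F y)).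
  intros y IH Ly Fy. apply no_min. exists y. repeat split; auto.
  intros r Lr Hr. exact (IH r (level_subsets_in y r Ly Hr) Lr).
Qed.

Lemma levels_comparable s t : level mem s -> level mem t -> comparable s t.
Proof.
  revert t. pattern s. apply subsets_in_induction. clear s.
  intros s IHs t Ls. pattern t. apply subsets_in_induction. clear t.
  intros t IHt Lt. apply NNPP. intros incomparable.
  apply incomparable. right. left. apply ext. intro x. split; intro Hx.
  - destruct (level_elem_sub_level s x Ls Hx) as [r [Lr [Hr Hxr]]].
    apply (level_subsets_in t r Lt); [| exact Hxr].
    destruct (IHs r (level_subsets_in s r Ls Hr) t Lr Lt) as [Hrt | [<- | Htr]].
    + exact Hrt.
    + exfalso. apply incomparable. right. right. exact Hr.
    + exfalso. apply incomparable. right. right. exact (level_trans s r t Ls Htr Hr).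
  - destruct (level_elem_sub_level t x Lt Hx) as [r [Lr [Hr Hxr]]].
    apply (level_subsets_in s r Ls); [| exact Hxr].
    destruct (IHt r (level_subsets_in t r Lt Hr) Lr) as [Hsr | [-> | Hrs]].
    + exfalso. apply incomparable. left. exact (level_trans t r s Lt Hsr Hr).
    + exfalso. apply incomparable. left. exact Hr.
    + exact Hrs.
Qed.

End Levels.

Theorem theorem12 (U : Type) (mem : U -> U -> Prop)
  (Hext : Extensionality mem) (Hsep : Separation mem) :
  (forall F : U -> Prop,
     (exists s, level mem s /\ F s) ->
     exists s, level mem s /\ F s /\ (forall r, level mem r -> mem r s -> ~ F r))
  /\
  (forall s t, level mem s -> level mem t -> mem s t \/ s = t \/ mem t s).
Proof.
  split.
  - exact (exists_min_level mem Hsep).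
  - exact (levels_comparable mem Hext Hsep).
Qed.
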